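(* In the setting described in the context (the random experiment for SA2), for any construction map $\zeta$ and any slot allocation $\tau$ of $\Lambda(\zeta)$ that occur with non-zero probability, the associated service placement $X^\tau$ is feasible, i.e. $\sum_{i\in S}s_i\mathbf 1[j\in X^\tau_i]\le c_j$ for all $j\in V$.
   Context: An SPSC instance: finite sets $S$ (services), $V$ (nodes), $U$ (users); sizes $s_i>0$; capacities $c_j>0$; for each user $k$ a service $i_k\in S$, a set $T_k\subseteq V$, a reward $w_k>0$. Let $\{x_{ij}\},\{y_k\}$ be an optimal solution of the LP with nonnegative variables: maximize $\sum_ky_kw_k$ s.t. $y_k\le\sum_{j\in T_k}x_{i_kj}$, $y_k\le1$; $\sum_ix_{ij}s_i\le c_j$; $x_{ij}=0$ if $s_i>c_j$; $0\le x_{ij}\le1$. Let $\beta:=1/4,\gamma:=1/2,\delta:=1/4$, $\mathbb N=\{1,2,\dots\}$. For $j\in V$: $P_j^\oplus:=\{i:c_j/2<s_i\le c_j\}$, $P_j^\ominus:=\{i:c_j/4<s_i\le c_j/2\}$, $P_j^q:=\{i:\gamma^qc_j\beta<s_i\le\gamma^{q-1}c_j\beta\}$ ($q\in\mathbb N$); $d_j^q:=\sum_{i\in P_j^q}x_{ij}$ for $q\in\mathbb N\cup\{\oplus,\ominus\}$; $v_j:=\delta c_j/\sum_{i:s_i\le c_j\beta}s_ix_{ij}$; $n_j^q:=\lceil v_jd_j^q\rceil$; $h_j:=d_j^\ominus$ if $d_j^\ominus<2$, else $d_j^\ominus/2$. A construction map $\zeta:V\to\{1,2,3\}$ has slot set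 $\Lambda(\zeta)$ (slot $\sigma$ has node $\nu(\sigma)$, class $\kappa(\sigma)$): for each $j$, one slot of class $\oplus$ if $\zeta(j)=1$; two slots of class $\ominus$ if $\zeta(j)=2$; for each $q\in\mathbb N$, $n_j^q$ slots of class $q$ if $\zeta(j)=3$; no other slots on $j$. A slot allocation of $\Lambda$ is $\tau:\Lambda\to S$ with $\tau(\sigma)\in P^{\kappa(\sigma)}_{\nu(\sigma)}$; $X^\tau_i:=\{j:\exists\sigma,\nu(\sigma)=j,\tau(\sigma)=i\}$. Random experiment: $\zeta(j)$ independent over $j$, equal to $1,2,3$ with probabilities $\delta d_j^\oplus,\ \delta h_j,\ 1-\delta d_j^\oplus-\delta h_j$; given $\zeta$, each slot $\sigma\in\Lambda(\zeta)$ independently gets $\tau(\sigma)=i$ with probability $x_{i\nu(\sigma)}/d^{\kappa(\sigma)}_{\nu(\sigma)}$, $i\in P^{\kappa(\sigma)}_{\nu(\sigma)}$. *)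

From HB Require Import structures.
From mathcomp Require Import all_boot all_order all_algebra.
From mathcomp Require Import all_classical all_reals.
Set Implicit Arguments. Unset Strict Implicit. Unset Printing Implicit Defensive.
Import Order.TTheory GRing.Theory Num.Theory.
Local Open Scope classical_set_scope.
Local Open Scope ring_scope.

(* Slot classes: oplus, ominus, or q (a natural number; only q >= 1 is used). *)
Inductive slot_class := CPlus | CMinus | CQ of nat.

Definition slot_class_enc (k : slot_class) : option (option nat) :=
  match k with CPlus => None | CMinus => Some None | CQ q => Some (Some q) end.
Definition slot_class_dec (o : option (option nat)) : slot_class :=
  match o with None => CPlus | Some None => CMinus | Some (Some q) => CQ q end.
Lemma slot_class_encK : cancel slot_class_enc slot_class_dec.
Proof. by case. Qed.
HB.instance Definition _ := Countable.copy slot_class (can_type slot_class_encK).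

(* A slot: (node nu, class kappa, index distinguishing slots of the same node and class). *)
Definition slot (V : finType) : Type := (V * slot_class * nat)%type.
Definition nu {V : finType} (sg : slot V) : V := sg.1.1.
Definition kappa {V : finType} (sg : slot V) : slot_class := sg.1.2.

Section SPSC.
Variables (R : realType) (S V U : finType).
Variables (s : S -> R) (c : V -> R).
Variables (iu : U -> S) (T : U -> {set V}) (w : U -> R).

Definition lp_feasible (x : S -> V -> R) (y : U -> R) : Prop :=
  (forall i j, 0 <= x i j) /\
  (forall k, 0 <= y k) /\
  (forall k, y k <= \sum_(j in T k) x (iu k) j) /\
  (forall k, y k <= 1) /\
  (forall j, \sum_(i : S) x i j * s i <= c j) /\
  (forall i j, c j < s i -> x i j = 0) /\
  (forall i j, x i j <= 1).

Definition lp_obj (y : U -> R) : R := \sum_(k : U) y k * w k.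

Definition lp_optimal (x : S -> V -> R) (y : U -> R) : Prop :=
  lp_feasible x y /\
  forall x' y', lp_feasible x' y' -> lp_obj y' <= lp_obj y.

Definition beta : R := 1 / 4.
Definition gamma : R := 1 / 2.
Definition delta : R := 1 / 4.

Definition inP (j : V) (k : slot_class) (i : S) : bool :=
  match k with
  | CPlus => (c j / 2 < s i) && (s i <= c j)
  | CMinus => (c j / 4 < s i) && (s i <= c j / 2)
  | CQ q => (gamma ^+ q * c j * beta < s i) && (s i <= gamma ^+ q.-1 * c j * beta)
  end.

Variable x : S -> V -> R.

Definition dd (j : V) (k : slot_class) : R := \sum_(i | inP j k i) x i j.

(* v_j; with MathComp's convention r / 0 = 0. *)
Definition vv (j : V) : R :=
  delta * c j / (\sum_(i | s i <= c j * beta) s i * x i j).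

Definition nn (j : V) (q : nat) : int := Num.ceil (vv j * dd j (CQ q)).

Definition hh (j : V) : R :=
  if dd j CMinus < 2 then dd j CMinus else dd j CMinus / 2.

Definition Lambda (zeta : V -> nat) : set (slot V) :=
  fun sg =>
    let: (j, k, m) := sg in
    match zeta j, k with
    | 1%N, CPlus => m = 0%N
    | 2%N, CMinus => (m < 2)%N
    | 3%N, CQ q => (1 <= q)%N /\ (m%:Z < nn j q)
    | _, _ => False
    end.

Definition slot_allocation (zeta : V -> nat) (tau : slot V -> S) : Prop :=
  forall sg, Lambda zeta sg -> inP (nu sg) (kappa sg) (tau sg).

Definition Xtau (zeta : V -> nat) (tau : slot V -> S) (i : S) : set V :=
  [set j | exists sg, [/\ Lambda zeta sg, nu sg = j & tau sg = i]].

Definition pzeta (j : V) (a : nat) : R :=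
  match a with
  | 1%N => delta * dd j CPlus
  | 2%N => delta * hh j
  | 3%N => 1 - delta * dd j CPlus - delta * hh j
  | _ => 0
  end.

Definition prob_zeta (zeta : V -> nat) : R := \prod_(j : V) pzeta j (zeta j).

Definition prob_tau (zeta : V -> nat) (tau : slot V -> S) : R :=
  \big[*%R/1]_(sg \in Lambda zeta) (x (tau sg) (nu sg) / dd (nu sg) (kappa sg)).

End SPSC.

From HB Require Import structures.
From mathcomp Require Import all_boot all_order all_algebra.
From mathcomp Require Import all_classical all_reals.
From mathcomp Require Import lra zify.
Set Implicit Arguments.
Unset Strict Implicit.
Unset Printing Implicit Defensive.
Import Order.TTheory GRing.Theory Num.Theory.
Local Open Scope classical_set_scope.
Local Open Scope ring_scope.

(* Every service placed on node j occupies a slot of j, and a slot of class k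
   only receives services of size at most the upper end of the range P_j^k.
   So the load of j is at most the sum of these caps over the slots of j: c_j
   for one slot of class (+), c_j/2 + c_j/2 for two slots of class (-).  For
   the small classes, n_j^q <= v_j d_j^q + 1, and every service of P_j^q is
   larger than half the cap gamma^(q-1) c_j beta, so that
   d_j^q gamma^(q-1) c_j beta <= 2 sum_(i in P_j^q) s_i x_ij.  The classes
   being disjoint, the caps add up to at most
   2 v_j sum_(s_i <= c_j beta) s_i x_ij + 2 beta c_j = 2 delta c_j + 2 beta c_j = c_j. *)

Lemma ler_sum_cover (R : numDomainType) (I : finType) (T : Type) (f : T -> I)
    (r : seq T) (A : pred I) (F : I -> R) :
  (forall i, 0 <= F i) -> (forall i, A i -> i \in map f r) ->
  \sum_(i | A i) F i <= \sum_(t <- r) F (f t).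
Proof.
elim: r A => [|t r IHr] A F_ge0 A_cover.
  by rewrite big_nil big_pred0 // => i; apply/negP => /A_cover.
rewrite big_cons (bigID (pred1 (f t))) /= lerD //.
  rewrite big_mkcond (bigD1 (f t)) //= eqxx andbT big1 ?addr0.
    by case: ifP => // _; exact: F_ge0.
  by move=> i /negbTE->; rewrite andbF.
by apply: IHr => // i /andP[/A_cover + ne_i]; rewrite inE (negbTE ne_i).
Qed.

Lemma ler_sum_disjoint_classes (R : numDomainType) (I : finType) (J : eqType)
    (r : seq J) (P : J -> pred I) (Q : pred I) (F : I -> R) :
  uniq r -> (forall i, 0 <= F i) -> (forall q i, P q i -> Q i) ->
  (forall q1 q2 i, P q1 i -> P q2 i -> q1 = q2) ->
  \sum_(q <- r) \sum_(i | P q i) F i <= \sum_(i | Q i) F i.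
Proof.
move=> r_uniq F_ge0 PQ P_inj.
rewrite (exchange_big_dep Q) /=; last by move=> q i _ /PQ.
apply: ler_sum => i _; rewrite big_const_seq iter_addr_0.
have count_le1 : (count (fun q => P q i) r <= 1)%N.
  rewrite -size_filter; case r_i: [seq q <- r | P q i] => [//|q0 t].
  have P0 : P q0 i by have := mem_head q0 t; rewrite -r_i mem_filter => /andP[].
  rewrite -r_i (@uniq_leq_size _ _ [:: q0]) ?filter_uniq // => q.
  by rewrite mem_filter inE => /andP[Pq _]; rewrite (P_inj _ _ _ Pq P0).
by case: (count _ _) count_le1 => [|[|//]] _; rewrite ?mulr0n.
Qed.

Lemma sum_geometric_half_le (R : realType) (M : nat) :
  \sum_(0 <= q < M) gamma R ^+ q <= 2.
Proof.
have -> : \sum_(0 <= q < M) gamma R ^+ q = 2 - 2 * gamma R ^+ M.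
  elim: M => [|M IHM]; first by rewrite big_geq // expr0; lra.
  by rewrite big_nat_recr //= IHM exprS /gamma; lra.
by have := exprn_ge0 M (_ : 0 <= gamma R); rewrite /gamma; lra.
Qed.

Section SmallClasses.
Variables (R : realType) (S V : finType) (s : S -> R) (c : V -> R).
Variables (x : S -> V -> R) (j : V).
Hypotheses (s_gt0 : forall i, 0 < s i) (cj_gt0 : 0 < c j).
Hypothesis x_ge0 : forall i, 0 <= x i j.

Let small_mass := \sum_(i | s i <= c j * beta R) s i * x i j.

Let cbeta_gt0 : 0 < c j * beta R.
Proof. by rewrite mulr_gt0 // /beta; lra. Qed.

Lemma inP_CQ_inj q1 q2 i :
  inP s c j (CQ q1) i -> inP s c j (CQ q2) i -> q1 = q2.
Proof.
wlog lt12 : q1 q2 / (q1 < q2)%N.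
  move=> wlog_lt P1 P2; case: (ltngtP q1 q2) => [lt12|lt21|//].
  - exact: wlog_lt P1 P2.
  - exact/esym/(wlog_lt _ _ lt21 P2 P1).
move=> /andP[lo1 _] /andP[_ hi2]; rewrite -!mulrA in lo1 hi2.
have gamma_le : gamma R ^+ q2.-1 <= gamma R ^+ q1.
  by apply: ler_wiXn2l; rewrite /gamma; [lra|lra|lia].
have := lt_le_trans lo1 (le_trans hi2 (ler_wpM2r (ltW cbeta_gt0) gamma_le)).
by rewrite ltxx.
Qed.

Lemma inP_CQ_small q i : inP s c j (CQ q) i -> s i <= c j * beta R.
Proof.
move=> /andP[_ /le_trans]; apply; rewrite -mulrA ler_piMl ?(ltW cbeta_gt0) //.
by apply: exprn_ile1; rewrite /gamma; lra.
Qed.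

Lemma CQ_bounded : exists M, forall q i, inP s c j (CQ q.+1) i -> (q < M)%N.
Proof.
exists (\max_i Num.bound (c j * beta R / s i))%N => q i /andP[_ hi].
have pow2_le : ((2 ^ q)%N%:R : R) <= c j * beta R / s i.
  have half_pow : 2 ^+ q * gamma R ^+ q = 1.
    by rewrite -exprMn (_ : 2 * gamma R = 1) ?expr1n // /gamma; lra.
  rewrite ler_pdivlMr // natrX.
  apply: le_trans (ler_wpM2l (exprn_ge0 q _) hi) _; first lra.
  by rewrite !mulrA half_pow mul1r.
have bound_ge0 : 0 <= c j * beta R / s i.
  by rewrite divr_ge0 ?(ltW cbeta_gt0) ?(ltW (s_gt0 i)).
have := le_lt_trans pow2_le (archi_boundP bound_ge0).
rewrite ltr_nat => /(ltn_trans (ltn_expl q (isT : 1 < 2)%N)) lt_bound.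
exact: leq_trans lt_bound (@leq_bigmax _ (fun i => Num.bound _) i).
Qed.

Lemma dd_ge0 k : 0 <= dd s c x j k.
Proof. by apply: sumr_ge0 => i _; exact: x_ge0. Qed.

Lemma vv_ge0 : 0 <= vv s c x j.
Proof.
rewrite /vv divr_ge0 //; first by rewrite mulr_ge0 ?(ltW cj_gt0) // /delta; lra.
by apply: sumr_ge0 => i _; rewrite mulr_ge0 ?(ltW (s_gt0 i)).
Qed.

Lemma vv_mul_small_mass : vv s c x j * small_mass <= delta R * c j.
Proof.
rewrite /vv -/small_mass; have [->|mass_neq0] := eqVneq small_mass 0.
  by rewrite mulr0 mulr_ge0 ?(ltW cj_gt0) // /delta; lra.
by rewrite divfK.
Qed.

Lemma nn_ge0 q : 0 <= nn s c x j q.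
Proof. by rewrite /nn ceil_ge0 (lt_le_trans _ (mulr_ge0 vv_ge0 (dd_ge0 _))) ?ltrN10. Qed.

Lemma nn_le_vv_dd_add1 q : (nn s c x j q)%:~R <= vv s c x j * dd s c x j (CQ q) + 1.
Proof. by have := ceilB1_lt (vv s c x j * dd s c x j (CQ q)); rewrite intrB /nn; lra. Qed.

Lemma dd_CQ_mul_cap_le q :
  dd s c x j (CQ q.+1) * (gamma R ^+ q * c j * beta R)
    <= 2 * \sum_(i | inP s c j (CQ q.+1) i) s i * x i j.
Proof.
rewrite /dd mulr_suml mulr_sumr; apply: ler_sum => i /andP[lo _].
have cap_le : gamma R ^+ q * c j * beta R <= 2 * s i.
  by move: lo; rewrite exprSr /gamma; lra.
by have := x_ge0 i; nra.
Qed.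

Lemma sum_CQ_le_small_mass M :
  \sum_(0 <= q < M) \sum_(i | inP s c j (CQ q.+1) i) s i * x i j <= small_mass.
Proof.
apply: ler_sum_disjoint_classes => [|i|q i|q1 q2 i P1 P2].
- exact: iota_uniq.
- exact: mulr_ge0 (ltW (s_gt0 i)) (x_ge0 i).
- exact: inP_CQ_small.
- by have [] := inP_CQ_inj P1 P2.
Qed.

Lemma sum_CQ_caps_le M :
  \sum_(0 <= q < M) `|nn s c x j q.+1|%N%:R * (gamma R ^+ q * c j * beta R) <= c j.
Proof.
set v := vv s c x j; set cap := fun q => gamma R ^+ q * c j * beta R.
have slot_le q : `|nn s c x j q.+1|%N%:R * cap q
    <= v * (dd s c x j (CQ q.+1) * cap q) + c j * beta R * gamma R ^+ q.
  have cap_ge0 : 0 <= cap q.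
    by rewrite /cap -mulrA mulr_ge0 ?(ltW cbeta_gt0) ?exprn_ge0 // /gamma; lra.
  rewrite natr_absz ger0_norm ?nn_ge0 //.
  apply: le_trans (ler_wpM2r cap_ge0 (nn_le_vv_dd_add1 q.+1)) _.
  by rewrite /cap /v; lra.
apply: le_trans (ler_sum _ (fun q _ => slot_le q)) _.
rewrite big_split /= -!mulr_sumr.
have mass_le : \sum_(0 <= q < M) dd s c x j (CQ q.+1) * cap q <= 2 * small_mass.
  apply: le_trans (ler_sum _ (fun q _ => dd_CQ_mul_cap_le q)) _.
  by rewrite -mulr_sumr ler_wpM2l ?sum_CQ_le_small_mass.
have := ler_wpM2l vv_ge0 mass_le; rewrite mulrCA -/v.
have := ler_wpM2l (ltW cbeta_gt0) (sum_geometric_half_le R M).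
have := vv_mul_small_mass; rewrite -/v /delta /beta; lra.
Qed.

End SmallClasses.

Section NodeSlots.
Variables (R : realType) (S V : finType) (s : S -> R) (c : V -> R).
Variables (x : S -> V -> R) (zeta : V -> nat) (tau : slot V -> S).
Hypotheses (s_gt0 : forall i, 0 < s i) (c_gt0 : forall j, 0 < c j).
Hypothesis x_ge0 : forall i j, 0 <= x i j.
Hypothesis tau_alloc : slot_allocation s c x zeta tau.

Definition class_cap (j : V) (k : slot_class) : R :=
  match k with
  | CPlus => c j
  | CMinus => c j / 2
  | CQ q => gamma R ^+ q.-1 * c j * beta R
  end.

Lemma inP_le_class_cap j k i : inP s c j k i -> s i <= class_cap j k.
Proof. by case: k => [||q] /andP[]. Qed.

(* The slots of Lambda(zeta) on node j, provided no service of P_j^q has q > M. *)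
Definition node_slots (M : nat) (j : V) : seq (slot V) :=
  match zeta j with
  | 1%N => [:: (j, CPlus, 0%N)]
  | 2%N => [:: (j, CMinus, 0%N); (j, CMinus, 1%N)]
  | 3%N => [seq (j, CQ q.+1, m) | q <- iota 0 M, m <- iota 0 `|nn s c x j q.+1|]
  | _ => [::]
  end.

Lemma node_slots_Lambda M j sg : sg \in node_slots M j -> Lambda s c x zeta sg.
Proof.
rewrite /node_slots; case zj: (zeta j) => [|[|[|[|n]]]] //.
- by rewrite inE => /eqP->; rewrite /Lambda /= zj.
- by rewrite !inE => /orP[] /eqP->; rewrite /Lambda /= zj.
case/allpairsPdep => q [m [_ m_lt ->]]; rewrite /Lambda /= zj; split=> //.
have := nn_ge0 s_gt0 (c_gt0 j) (x_ge0^~ j) q.+1.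
by move: m_lt; rewrite mem_iota add0n; case: (nn _ _ _ _ _).
Qed.

Lemma node_slots_nu M j sg : sg \in node_slots M j -> nu sg = j.
Proof.
rewrite /node_slots; case: (zeta j) => [|[|[|[|n]]]] //.
- by rewrite inE => /eqP->.
- by rewrite !inE => /orP[] /eqP->.
by case/allpairsPdep => q [m [_ _ ->]].
Qed.

Lemma Lambda_mem_node_slots M j sg :
  (forall q i, inP s c j (CQ q.+1) i -> (q < M)%N) ->
  Lambda s c x zeta sg -> nu sg = j -> sg \in node_slots M j.
Proof.
move=> CQ_lt_M; case: sg => [[j' k] m] L_sg; rewrite /nu /= => j'_j; subst j'.
have := tau_alloc L_sg; move: L_sg; rewrite /Lambda /node_slots /=.
case: (zeta j) => [|[|[|[|n]]]] //; case: k => [||q] //=.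
- by move=> -> _; rewrite inE.
- by case: m => [|[|]] // _ _; rewrite !inE eqxx ?orbT.
case: q => [[]//|q] [_ m_lt] /(CQ_lt_M q) q_lt.
apply/allpairsPdep; exists q, m; rewrite !mem_iota /=; split=> //.
by move: m_lt; case: (nn _ _ _ _ _) => // n; rewrite ltz_nat.
Qed.

Lemma node_slots_caps_le M j :
  \sum_(sg <- node_slots M j) class_cap j (kappa sg) <= c j.
Proof.
rewrite /node_slots; case: (zeta j) => [|[|[|[|n]]]]; try by rewrite big_nil ltW.
- by rewrite big_seq1.
- by rewrite !big_cons big_nil /=; lra.
- rewrite big_allpairs_dep /=.
  apply: le_trans (sum_CQ_caps_le s_gt0 (c_gt0 j) (x_ge0^~ j) M).
  rewrite /index_iota subn0; apply: ler_sum => q _.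
  by rewrite big_const_seq count_predT size_iota iter_addr_0 mulr_natl.
Qed.

Lemma node_load_le M j :
  (forall q i, inP s c j (CQ q.+1) i -> (q < M)%N) ->
  \sum_(i | `[< Xtau s c x zeta tau i j >]) s i <= c j.
Proof.
move=> CQ_lt_M.
apply: le_trans (node_slots_caps_le M j).
apply: le_trans (ler_sum_cover (f := tau) (r := node_slots M j) _ _) _.
- by move=> i; exact: ltW.
- move=> i /asboolP[sg [L_sg nu_sg <-]].
  exact/map_f/(Lambda_mem_node_slots CQ_lt_M L_sg nu_sg).
rewrite !big_seq; apply: ler_sum => sg sg_in.
have := inP_le_class_cap (tau_alloc (node_slots_Lambda sg_in)).
by rewrite (node_slots_nu sg_in).
Qed.

End NodeSlots.

Theorem theorem9 (R : realType) (S V U : finType)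
  (s : S -> R) (c : V -> R) (iu : U -> S) (T : U -> {set V}) (w : U -> R)
  (x : S -> V -> R) (y : U -> R)
  (hs : forall i, 0 < s i) (hc : forall j, 0 < c j) (hw : forall k, 0 < w k)
  (hopt : lp_optimal s c iu T w x y)
  (zeta : V -> nat) (tau : slot V -> S)
  (hzeta : forall j, zeta j \in [:: 1%N; 2%N; 3%N])
  (htau : slot_allocation s c x zeta tau)
  (hprob : prob_zeta s c x zeta * prob_tau s c x zeta tau != 0) :
  forall j : V, \sum_(i : S | `[< Xtau s c x zeta tau i j >]) s i <= c j.
Proof.
have [[x_ge0 _] _] := hopt; move=> j.
have [M CQ_lt_M] := CQ_bounded hs (hc j).
by have := node_load_le hs hc x_ge0 htau CQ_lt_M.
Qed.
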